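(* Let $b\in(0,1)$, $\phi\in(0,1)$ and $h_G>1$. Consider the set of solutions $(x,y)$ with $\tfrac12\le y\le x\le1$ of the system $$x=\frac{x^b(h_Gy+1-y)}{x^b(h_Gy+1-y)+(1-x)^b(y+h_G-h_Gy)},\qquad y=\phi x+\frac{1-\phi}{h_G+1}(h_Gy+1-y).$$ Let $\mathcal S=\{(\tfrac12,\tfrac12),\,(1,\frac{\phi h_G+1}{\phi h_G+2-\phi})\}$. If $0<b\le\frac{2}{\phi(h_G-1)+2}$, the solution set is $\mathcal S$; otherwise (i.e. $\frac{2}{\phi(h_G-1)+2}<b<1$) the solution set is $\mathcal S\cup\{(\hat x(\phi,h_G,b),\frac{\phi(h_G+1)\hat x(\phi,h_G,b)+1-\phi}{\phi h_G+2-\phi})\}$.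
   Context: For $0<b<1$ define $g(x,b)=\frac{x^{1-b}-(1-x)^{1-b}}{x(1-x)^{1-b}-(1-x)x^{1-b}}$ for $x\in(\tfrac12,1)$ and $g(\tfrac12,b)=\frac2b-2$. When $\frac{2}{\phi(h_G-1)+2}<b<1$, $\hat x(\phi,h_G,b)$ denotes the unique solution $x\in(\tfrac12,1)$ of $g(x,b)=\phi(h_G-1)$. *)

(* R : realType, real powers via powR (0 `^ b = 0 for b <> 0). *)
From HB Require Import structures.
From mathcomp Require Import all_boot all_order all_algebra.
From mathcomp Require Import all_classical all_reals all_analysis.
Set Implicit Arguments. Unset Strict Implicit. Unset Printing Implicit Defensive.
Import Order.TTheory GRing.Theory Num.Theory.
Local Open Scope ring_scope.
Local Open Scope classical_set_scope.

Definition gfun {R : realType} (x b : R) : R :=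
  if x == 2^-1 then 2 / b - 2
  else (x `^ (1 - b) - (1 - x) `^ (1 - b)) /
       (x * (1 - x) `^ (1 - b) - (1 - x) * x `^ (1 - b)).

Definition xhat {R : realType} (phi hG b : R) : R :=
  xget 0 [set x : R | 2^-1 < x < 1 /\ gfun x b = phi * (hG - 1)].

Definition solset {R : realType} (b phi hG : R) : set (R * R) :=
  [set p : R * R | let x := p.1 in let y := p.2 in
     [/\ 2^-1 <= y, y <= x, x <= 1,
         x = x `^ b * (hG * y + 1 - y) /
             (x `^ b * (hG * y + 1 - y) + (1 - x) `^ b * (y + hG - hG * y))
       & y = phi * x + (1 - phi) / (hG + 1) * (hG * y + 1 - y)]].

Definition Sset {R : realType} (phi hG : R) : set (R * R) :=
  [set (2^-1, 2^-1); (1, (phi * hG + 1) / (phi * hG + 2 - phi))].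

From HB Require Import structures.
From mathcomp Require Import all_boot all_order all_algebra.
From mathcomp Require Import all_classical all_reals all_analysis.
From mathcomp Require Import ring lra.
Import numFieldNormedType.Exports.
Set Implicit Arguments. Unset Strict Implicit. Unset Printing Implicit Defensive.
Import Order.TTheory GRing.Theory Num.Theory.
Local Open Scope ring_scope.
Local Open Scope classical_set_scope.

(* Solving the second equation gives y = ystar x, affine in x, and then
   1/2 <= y <= x <= 1 amounts to 1/2 <= x <= 1.  With A = h_G y + 1 - y and
   B = y + h_G - h_G y, both affine in x with A + B = h_G + 1, the first equation
   becomes x^(1-b) B = (1-x)^(1-b) A, and so does g(x,b) = phi (h_G - 1) on (1/2,1).
   Besides x = 1/2 and x = 1, the solutions are the zeros in (1/2,1) of
   [lgap] = (1-b) ln (x / (1-x)) + ln (B / A), which vanishes at 1/2 and whose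
   derivative has the sign of [dnum] = c0 + c2 (x - 1/2)^2, where c2 > 0 and
   c0 >= 0 exactly when b <= 2 / (phi (h_G - 1) + 2).  By Rolle, a zero x of [lgap]
   in (1/2,1) forces a critical point in (1/2,x), so there is none when c0 >= 0,
   and two zeros would force two critical points at different distances from 1/2.
   When c0 < 0, [lgap] is negative just right of 1/2 and positive near 1, hence
   has a zero. *)

Lemma is_derive_affine {R : realType} (p q x : R) :
  is_derive x 1 (fun y => p + q * y) q.
Proof.
have D := is_deriveD (is_derive_cst p x 1) (is_deriveZ q (is_derive_id x 1)).
have -> : (fun y => p + q * y) = cst p + q *: id by apply/funext.
by apply: is_derive_eq; rewrite add0r /GRing.scale /= mulr1.
Qed.

Lemma is_derive_ln_affine {R : realType} (p q x : R) : 0 < p + q * x ->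
  is_derive x 1 (fun y => ln (p + q * y)) (q / (p + q * x)).
Proof.
move=> pos; have := @is_derive1_comp R (@ln R) (fun y => p + q * y) x _ _
  (is_derive1_ln pos) (is_derive_affine p q x).
by move=> D; apply: (is_derive_eq D); rewrite mulrC.
Qed.

Lemma eq_ratio {R : realFieldType} (x s t : R) : 0 < s + t ->
  x = s / (s + t) <-> x * t = (1 - x) * s.
Proof.
move=> st; split => [->|E]; first by field; rewrite lt0r_neq0.
by apply: (mulIf (lt0r_neq0 st)); rewrite mulfVK ?lt0r_neq0 //; lra.
Qed.

Lemma powR_split {R : realType} (c x : R) : 0 < x -> x = x `^ c * x `^ (1 - c).
Proof.
move=> x0; rewrite -powRD; last by apply/implyP => _; rewrite lt0r_neq0.
by rewrite addrC subrK powRr1 // ltW.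
Qed.

Section Equilibria.
Variable R : realType.
Variables phi h : R.
Hypothesis phi_gt0 : 0 < phi.
Hypothesis phi_lt1 : phi < 1.
Hypothesis h_gt1 : 1 < h.

Definition yden := phi * h + 2 - phi.
Definition ystar (x : R) := (phi * (h + 1) * x + 1 - phi) / yden.
Definition wA (x : R) := h * ystar x + 1 - ystar x.
Definition wB (x : R) := ystar x + h - h * ystar x.
Definition slope := (h - 1) * phi * (h + 1) / yden.

Lemma yden_gt0 : 0 < yden.
Proof.
have : 0 < phi * (h - 1) by rewrite mulr_gt0 // subr_gt0.
by rewrite /yden; lra.
Qed.

Lemma yden_neq0 : yden != 0.
Proof. exact: lt0r_neq0 yden_gt0. Qed.

Lemma ystar_half : ystar 2^-1 = 2^-1.
Proof. by rewrite /ystar /yden; field; exact: yden_neq0. Qed.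

Lemma ystar_one : ystar 1 = (phi * h + 1) / yden.
Proof. by rewrite /ystar /yden; field; exact: yden_neq0. Qed.

Lemma ystar_ge_half (x : R) : (2^-1 <= ystar x) = (2^-1 <= x).
Proof.
have E : ystar x - 2^-1 = (x - 2^-1) * (phi * (h + 1) / yden).
  by rewrite /ystar /yden; field; exact: yden_neq0.
have k0 : 0 < phi * (h + 1) / yden.
  by rewrite divr_gt0 ?yden_gt0 // mulr_gt0 //; have := h_gt1; lra.
by rewrite -subr_ge0 E pmulr_lge0 // subr_ge0.
Qed.

Lemma ystar_le (x : R) : (ystar x <= x) = (2^-1 <= x).
Proof.
have E : x - ystar x = (x - 2^-1) * (2 * (1 - phi) / yden).
  by rewrite /ystar /yden; field; exact: yden_neq0.
have k0 : 0 < 2 * (1 - phi) / yden.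
  by rewrite divr_gt0 ?yden_gt0 // mulr_gt0 //; have := phi_lt1; lra.
by rewrite -[ystar x <= x]subr_ge0 E pmulr_lge0 // subr_ge0.
Qed.

Lemma ystar_bounds (x : R) : 0 <= x <= 1 -> 0 < ystar x < 1.
Proof.
move=> /andP[x0 x1]; have p0 := phi_gt0; have p1 := phi_lt1; have h1 := h_gt1.
have E : ystar x * yden = phi * (h + 1) * x + 1 - phi by rewrite mulfVK ?yden_neq0.
move: E (yden_gt0); rewrite /yden => E D.
have H1 : 0 <= phi * (h + 1) * (1 - x) by apply: mulr_ge0; [apply: mulr_ge0|]; lra.
have H2 : 0 <= phi * (h + 1) * x by apply: mulr_ge0; [apply: mulr_ge0|]; lra.
apply/andP; split; nra.
Qed.

Lemma wA_bounds (x : R) : 0 <= x <= 1 -> 1 <= wA x <= h.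
Proof.
have h1 := h_gt1; move=> /ystar_bounds; rewrite /wA; set y := ystar x => Hy.
by apply/andP; split; nra.
Qed.

Lemma wB_bounds (x : R) : 0 <= x <= 1 -> 1 <= wB x <= h.
Proof.
have h1 := h_gt1; move=> /ystar_bounds; rewrite /wB; set y := ystar x => Hy.
by apply/andP; split; nra.
Qed.

Lemma wA_gt0 (x : R) : 0 <= x <= 1 -> 0 < wA x.
Proof. by move=> /wA_bounds /andP[+ _]; apply: lt_le_trans. Qed.

Lemma wB_gt0 (x : R) : 0 <= x <= 1 -> 0 < wB x.
Proof. by move=> /wB_bounds /andP[+ _]; apply: lt_le_trans. Qed.

Lemma wA_affine (x : R) : wA x = wA 0 + slope * x.
Proof. by rewrite /wA /slope /ystar /yden; field; exact: yden_neq0. Qed.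

Lemma wB_affine (x : R) : wB x = wB 0 - slope * x.
Proof. by rewrite /wB /slope /ystar /yden; field; exact: yden_neq0. Qed.

Lemma wB_half : wB 2^-1 = wA 2^-1.
Proof. by rewrite /wA /wB ystar_half; field. Qed.

Lemma wA_add_wB (x : R) : wA x + wB x = h + 1.
Proof. by rewrite /wA /wB; ring. Qed.

Lemma slope_bounds : 0 < slope < h + 1.
Proof.
have E : slope * yden = (h - 1) * phi * (h + 1) by rewrite mulfVK ?yden_neq0.
have E2 : (h + 1 - slope) * yden = 2 * (h + 1) by rewrite mulrBl E /yden; ring.
have D := yden_gt0; have p0 := phi_gt0; have p1 := phi_lt1; have h1 := h_gt1.
apply/andP; split; first by rewrite -(pmulr_lgt0 _ D) E !mulr_gt0 //; lra.
by rewrite -subr_gt0 -(pmulr_lgt0 _ D) E2; lra.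
Qed.

Lemma ystar_fixed (x : R) y :
  y = phi * x + (1 - phi) / (h + 1) * (h * y + 1 - y) <-> y = ystar x.
Proof.
have h1 : h + 1 != 0 by apply: lt0r_neq0; have := h_gt1; lra.
have I : y - (phi * x + (1 - phi) / (h + 1) * (h * y + 1 - y)) =
         (y - ystar x) * yden / (h + 1).
  by have := yden_neq0; rewrite /ystar /yden => D; field; apply/andP.
split=> E.
- move: I; rewrite -E subrr => /esym/eqP.
  by rewrite !mulf_eq0 invr_eq0 (negbTE h1) (negbTE yden_neq0) !orbF subr_eq0 => /eqP.
- by apply/eqP; rewrite -subr_eq0 I E subrr !mul0r.
Qed.

Section LogGap.
Variable a : R.

Definition balanced (x : R) := x `^ a * wB x = (1 - x) `^ a * wA x.
Definition lgap (x : R) := a * ln x - a * ln (1 - x) + ln (wB x) - ln (wA x).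
Definition dlgap (x : R) := a / x + a / (1 - x) - slope / wB x - slope / wA x.
Definition dnum0 := (h + 1) / 4 * (a * (h + 1) - slope).
Definition dnum2 := slope * (h + 1 - a * slope).
Definition dnum (x : R) := dnum0 + dnum2 * (x - 2^-1) ^+ 2.

Lemma is_derive_lgap (x : R) : 0 < x < 1 -> is_derive x 1 lgap (dlgap x).
Proof.
move=> /andP[x0 x1]; have hx : 0 <= x <= 1 by rewrite !ltW.
have D1 := @is_derive_ln_affine R 0 1 x ltac:(lra).
have D2 := @is_derive_ln_affine R 1 (-1) x ltac:(lra).
have D3 := @is_derive_ln_affine R (wB 0) (- slope) x
  ltac:(by rewrite mulNr -wB_affine wB_gt0).
have D4 := @is_derive_ln_affine R (wA 0) slope x ltac:(by rewrite -wA_affine wA_gt0).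
have := is_deriveB (is_deriveD (is_deriveB (is_deriveZ a D1) (is_deriveZ a D2)) D3) D4.
set F := (X in is_derive _ _ X _) => D.
have -> : lgap = F.
  apply/funext => y; rewrite /F /lgap !fctE /= add0r mul1r mulN1r mulNr.
  by rewrite -wA_affine -wB_affine.
apply: (is_derive_eq D).
rewrite add0r !mul1r !mulN1r (mulNr slope x) -wA_affine -wB_affine.
by rewrite /dlgap /GRing.scale /=; ring.
Qed.

Lemma lgap_continuous (p q : R) :
  0 < p -> q < 1 -> {within `[p, q], continuous lgap}.
Proof.
move=> p0 q1; apply: derivable_within_continuous => z; rewrite in_itv /= => /andP[pz zq].
have zI : 0 < z < 1 by apply/andP; split; lra.
by have [] := is_derive_lgap zI.
Qed.

Lemma lgap_mvt (p q : R) : 0 < p -> p < q -> q < 1 ->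
  exists2 c, p < c < q & lgap q - lgap p = dlgap c * (q - p).
Proof.
move=> p0 pq q1.
have der z : z \in `]p, q[%R -> is_derive z 1 lgap (dlgap z).
  by rewrite in_itv /= => /andP[pz zq]; apply: is_derive_lgap; apply/andP; split; lra.
by have [c] := MVT pq der (lgap_continuous p0 q1); rewrite in_itv /=; exists c.
Qed.

Lemma dnumE (x : R) : dnum x = a * wA x * wB x - slope * (h + 1) * (x * (1 - x)).
Proof.
rewrite /dnum /dnum0 /dnum2 /slope /wA /wB /ystar /yden.
by field; exact: yden_neq0.
Qed.

Lemma dlgapE (x : R) : 0 < x < 1 -> dlgap x = dnum x / (x * (1 - x) * wA x * wB x).
Proof.
move=> /andP[x0 x1]; have hx : 0 <= x <= 1 by rewrite !ltW.
have A0 := wA_gt0 hx; have B0 := wB_gt0 hx.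
rewrite dnumE -(wA_add_wB x) /dlgap.
by field; rewrite !lt0r_neq0 // subr_gt0.
Qed.

Lemma dlgap_den_gt0 (x : R) : 0 < x < 1 -> 0 < x * (1 - x) * wA x * wB x.
Proof.
move=> /andP[x0 x1]; have hx : 0 <= x <= 1 by rewrite !ltW.
by rewrite !mulr_gt0 ?wA_gt0 ?wB_gt0 ?subr_gt0.
Qed.

Lemma dlgap_lt0 (x : R) : 0 < x < 1 -> (dlgap x < 0) = (dnum x < 0).
Proof. by move=> x01; rewrite dlgapE // pmulr_llt0 // invr_gt0 dlgap_den_gt0. Qed.

Lemma dlgap_eq0 (x : R) : 0 < x < 1 -> (dlgap x == 0) = (dnum x == 0).
Proof.
move=> x01; have D := dlgap_den_gt0 x01.
by rewrite dlgapE // mulf_eq0 invr_eq0 (gt_eqF D) orbF.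
Qed.

Lemma lgap_half : lgap 2^-1 = 0.
Proof.
rewrite /lgap wB_half; have -> : 1 - 2^-1 = 2^-1 :> R by field.
by ring.
Qed.

Lemma balanced_half : balanced 2^-1.
Proof. by rewrite /balanced wB_half; have -> : 1 - 2^-1 = 2^-1 :> R by field. Qed.

Lemma lgapE (x : R) : 0 < x < 1 ->
  lgap x = ln (x `^ a * wB x) - ln ((1 - x) `^ a * wA x).
Proof.
move=> /andP[x0 x1]; have hx : 0 <= x <= 1 by rewrite !ltW.
have x1' : 0 < 1 - x by rewrite subr_gt0.
by rewrite /lgap !lnM ?posrE ?powR_gt0 ?wA_gt0 ?wB_gt0 // !ln_powR; ring.
Qed.

Lemma lgap_eq0 (x : R) : 0 < x < 1 -> lgap x = 0 <-> balanced x.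
Proof.
move=> /[dup] x01 /andP[x0 x1]; have hx : 0 <= x <= 1 by rewrite !ltW.
have x1' : 0 < 1 - x by rewrite subr_gt0.
rewrite lgapE //; split => [/eqP|->]; last by rewrite subrr.
rewrite subr_eq0 => /eqP; apply: ln_inj;
  by rewrite posrE mulr_gt0 ?powR_gt0 ?wA_gt0 ?wB_gt0.
Qed.

Lemma lgap_gt0 (x : R) : 0 < x < 1 ->
  (0 < lgap x) = ((1 - x) `^ a * wA x < x `^ a * wB x).
Proof.
move=> /[dup] x01 /andP[x0 x1]; have hx : 0 <= x <= 1 by rewrite !ltW.
have x1' : 0 < 1 - x by rewrite subr_gt0.
by rewrite lgapE // subr_gt0 ltr_ln // posrE mulr_gt0 ?powR_gt0 ?wA_gt0 ?wB_gt0.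
Qed.

Lemma lgap_eq_crit (p q : R) : 0 < p -> p < q -> q < 1 -> lgap p = lgap q ->
  exists2 c, p < c < q & dnum c = 0.
Proof.
move=> p0 pq q1 Lpq; have [c /andP[pc cq]] := lgap_mvt p0 pq q1.
have qp : q - p != 0 by rewrite subr_eq0 gt_eqF.
rewrite Lpq subrr => /esym/eqP; rewrite mulf_eq0 (negbTE qp) orbF.
have c01 : 0 < c < 1 by apply/andP; split; lra.
by rewrite dlgap_eq0 // => /eqP; exists c => //; apply/andP.
Qed.

Lemma dnum0E : dnum0 = (h + 1) ^+ 2 / 4 * (2 / yden - (1 - a)).
Proof. by rewrite /dnum0 /slope /yden; field; exact: yden_neq0. Qed.

Lemma dnum0_ge0 : (0 <= dnum0) = (1 - a <= 2 / (phi * (h - 1) + 2)).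
Proof.
have h1 := h_gt1.
rewrite dnum0E pmulr_rge0 ?subr_ge0; last by rewrite divr_gt0 ?exprn_gt0 //; lra.
by rewrite /yden; congr (_ <= 2 / _); ring.
Qed.

Hypothesis a_gt0 : 0 < a.
Hypothesis a_lt1 : a < 1.

Lemma dnum2_gt0 : 0 < dnum2.
Proof.
have /andP[s0 s1] := slope_bounds; have a0 := a_gt0; have a1 := a_lt1.
by apply: mulr_gt0 => //; nra.
Qed.

Lemma dnum_lt (x y : R) : 2^-1 <= x -> x < y -> dnum x < dnum y.
Proof.
move=> x0 xy; rewrite /dnum ltrD2l ltr_pM2l ?dnum2_gt0 //.
by rewrite ltr_pXn2r // ?nnegrE; lra.
Qed.

Lemma dnum_half : dnum 2^-1 = dnum0.
Proof. by rewrite /dnum subrr expr0n mulr0 addr0. Qed.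

Lemma balanced_none (x : R) : 0 <= dnum0 -> 2^-1 < x < 1 -> ~ balanced x.
Proof.
move=> d0 /andP[x0 x1] bx; have half0 : (0 : R) < 2^-1 by rewrite invr_gt0.
have x01 : 0 < x < 1 by apply/andP; split; lra.
have Lx := (lgap_eq0 x01).2 bx.
have [c /andP[c0 _] dc] := lgap_eq_crit half0 x0 x1 (etrans lgap_half (esym Lx)).
by have := dnum_lt (lexx _) c0; rewrite dnum_half dc; lra.
Qed.

Lemma balanced_uniq (x y : R) :
  2^-1 < x < 1 -> 2^-1 < y < 1 -> balanced x -> balanced y -> x = y.
Proof.
wlog xy : x y / x <= y.
  move=> W hx hy Bx By; case: (leP x y) => [xy|/ltW yx]; first exact: W.
  exact/esym/W.
move=> /andP[x0 x1] /andP[y0 y1] Bx By.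
move: xy; rewrite le_eqVlt => /orP[/eqP //|xy].
have half0 : (0 : R) < 2^-1 by rewrite invr_gt0.
have Lx : lgap x = 0 by apply/lgap_eq0 => //; apply/andP; split; lra.
have Ly : lgap y = 0 by apply/lgap_eq0 => //; apply/andP; split; lra.
have [c /andP[c0 cx] dc] := lgap_eq_crit half0 x0 x1 (etrans lgap_half (esym Lx)).
have [d /andP[xd _] dd] := lgap_eq_crit (lt_trans half0 x0) xy y1 (etrans Lx (esym Ly)).
by have := dnum_lt (ltW c0) (lt_trans cx xd); rewrite dc dd ltxx.
Qed.

Lemma lgap_neg_near_half : dnum0 < 0 -> exists2 x, 2^-1 < x < 4^-1 * 3 & lgap x < 0.
Proof.
move=> d0; have d2 := dnum2_gt0; have half0 : (0 : R) < 2^-1 by rewrite invr_gt0.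
(* [dnum] stays negative on [1/2, 1/2 + t]. *)
pose t := Num.min 8^-1 (- dnum0 / dnum2).
have t0 : 0 < t by rewrite lt_min invr_gt0 ltr0n divr_gt0 // oppr_gt0.
have t8 : t <= 8^-1 by rewrite ge_min lexx.
have ts : dnum2 * t <= - dnum0 by rewrite mulrC -ler_pdivlMr // ge_min lexx orbT.
have t2 : dnum2 * t ^+ 2 < - dnum0 by nra.
have [c /andP[c0 ct]] := @lgap_mvt (2^-1) (2^-1 + t) half0 ltac:(lra) ltac:(lra).
rewrite lgap_half subr0 => Lt; exists (2^-1 + t); first by apply/andP; split; lra.
have c01 : 0 < c < 1 by apply/andP; split; lra.
rewrite Lt pmulr_llt0 ?dlgap_lt0 //; last by lra.
have : (c - 2^-1) ^+ 2 <= t ^+ 2 by rewrite ler_pXn2r // ?nnegrE; lra.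
by rewrite /dnum; nra.
Qed.

Lemma lgap_pos_near_one : exists2 x, 4^-1 * 3 <= x < 1 & 0 < lgap x.
Proof.
have h1 := h_gt1; have a0 := a_gt0; have a1 := a_lt1.
(* At x = 1 - e with e^a = 1/(4h): (1-x)^a wA x <= 1/4 < 3/4 <= x^a wB x. *)
pose d := (4 * h)^-1; pose e := d `^ a^-1.
have d0 : 0 < d by rewrite invr_gt0; lra.
have dh : d * h = 4^-1 by rewrite /d; field; lra.
have d4 : d <= 4^-1 by nra.
have e0 : 0 < e by rewrite powR_gt0.
have ed : e <= d.
  by apply: ge1r_powR; [apply/andP; split; lra | rewrite invf_ge1 // ltW].
have ea : e `^ a = d by rewrite -powRrM mulVf ?gt_eqF // powRr1 // ltW.
have hx : 0 <= 1 - e <= 1 by apply/andP; split; lra.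
have x01 : 0 < 1 - e < 1 by apply/andP; split; lra.
exists (1 - e); first by apply/andP; split; lra.
rewrite lgap_gt0 // subKr ea.
have /andP[_ Ah] := wA_bounds hx; have /andP[B1 _] := wB_bounds hx.
have P : 1 - e <= (1 - e) `^ a by apply: ger1_powR; [apply/andP; split; lra | exact: ltW].
by nra.
Qed.

Lemma balanced_exists : dnum0 < 0 -> exists2 x, 2^-1 < x < 1 & balanced x.
Proof.
move=> d0; have [x0 /andP[x00 x01] L0] := lgap_neg_near_half d0.
have [x1 /andP[x10 x11] L1] := lgap_pos_near_one.
have x0_gt0 : 0 < x0 by apply: lt_trans x00; rewrite invr_gt0.
have [|c] := IVT (ltW (lt_le_trans x01 x10)) (lgap_continuous x0_gt0 x11) (v := 0).
  by rewrite ge_min le_max (ltW L0) (ltW L1) orbT.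
rewrite in_itv /= => /andP[xc cx] Lc; exists c; first by apply/andP; split; lra.
by apply/lgap_eq0 => //; apply/andP; split; lra.
Qed.

End LogGap.

Variable b : R.
Hypothesis b_gt0 : 0 < b.
Hypothesis b_lt1 : b < 1.

Definition xfixed (x : R) :=
  x = x `^ b * wA x / (x `^ b * wA x + (1 - x) `^ b * wB x).

Definition inner_sol := [set x : R | 2^-1 < x < 1 /\ balanced (1 - b) x].

Lemma yden_balance (x u v : R) : yden * (u * wB x - v * wA x) =
  (h + 1) * (u - v - phi * (h - 1) * (x * v - (1 - x) * u)).
Proof. by rewrite /wA /wB /ystar /yden; field; exact: yden_neq0. Qed.

Lemma xfixed_balanced (x : R) : 0 < x < 1 -> xfixed x <-> balanced (1 - b) x.
Proof.
move=> /andP[x0 x1]; have hx : 0 <= x <= 1 by rewrite !ltW.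
have x1' : 0 < 1 - x by rewrite subr_gt0.
have PQ : x `^ b * (1 - x) `^ b != 0 by rewrite lt0r_neq0 // mulr_gt0 ?powR_gt0.
rewrite /xfixed eq_ratio; last by rewrite addr_gt0 // mulr_gt0 ?powR_gt0 ?wA_gt0 ?wB_gt0.
have xE := powR_split b x0; have yE := powR_split b x1'.
rewrite /balanced; set P := x `^ b; set Q := (1 - x) `^ b.
set u := x `^ (1 - b) in xE *; set v := (1 - x) `^ (1 - b) in yE *.
rewrite {1}xE yE (_ : P * u * (Q * wB x) = P * Q * (u * wB x)); last by ring.
rewrite (_ : Q * v * (P * wA x) = P * Q * (v * wA x)); last by ring.
by split => [/(mulfI PQ)|->].
Qed.

Lemma xfixed_half : xfixed 2^-1.
Proof.
have half01 : 0 < (2^-1 : R) < 1 by apply/andP; split; lra.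
exact/(xfixed_balanced half01)/balanced_half.
Qed.

Lemma xfixed_one : xfixed 1.
Proof.
have A0 : 0 < wA 1 by rewrite wA_gt0 // ler01 lexx.
rewrite /xfixed subrr powR0 ?lt0r_neq0 // mul0r addr0 powR1 mul1r divff //.
exact: lt0r_neq0.
Qed.

Lemma gfun_balanced (x : R) : 2^-1 < x < 1 ->
  gfun x b = phi * (h - 1) <-> balanced (1 - b) x.
Proof.
move=> /andP[x0 x1]; have half0 : (0 : R) < 2^-1 by rewrite invr_gt0.
have k0 : 0 < phi * (h - 1) by rewrite mulr_gt0 // subr_gt0.
have u0 : 0 < x `^ (1 - b) by rewrite powR_gt0 //; lra.
rewrite /gfun gt_eqF // /balanced.
set u := x `^ (1 - b); set v := (1 - x) `^ (1 - b); set k := phi * (h - 1) in k0 *.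
set den := x * v - (1 - x) * u.
have -> : u * wB x = v * wA x <-> u - v = k * den.
  have h1 : h + 1 != 0 by rewrite lt0r_neq0 //; have := h_gt1; lra.
  have I := yden_balance x u v; rewrite -/k -/den in I; split => E.
    move: I; rewrite E subrr mulr0 => /esym/eqP.
    by rewrite mulf_eq0 (negbTE h1) subr_eq0 => /eqP.
  by apply/eqP; rewrite -subr_eq0 -(mulrI_eq0 _ (lregP yden_neq0)) I E subrr mulr0.
split => E.
- have dn : den != 0.
    by apply/eqP => d0; move: k0; rewrite -E d0 invr0 mulr0 ltxx.
  by rewrite -E divfK.
- have dn : den != 0.
    apply/eqP => d0; move: E; rewrite d0 mulr0 => /eqP; rewrite subr_eq0 => /eqP uv.
    move: d0; rewrite /den -uv -mulrBl => /eqP.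
    by rewrite mulf_eq0 (gt_eqF u0) orbF subr_eq0 => /eqP; lra.
  by rewrite E mulfK.
Qed.

Lemma solsetP (x y : R) :
  solset b phi h (x, y) <-> [/\ y = ystar x, 2^-1 <= x <= 1 & xfixed x].
Proof.
rewrite /solset /=; split.
- case=> y0 yx x1 Fx /ystar_fixed Ey; subst y.
  by split => //; rewrite -ystar_ge_half y0 x1.
- case=> -> /andP[x0 x1] Fx; split => //.
  + by rewrite ystar_ge_half.
  + by rewrite ystar_le.
  + exact/ystar_fixed.
Qed.

Lemma solsetE : solset b phi h = (fun x => (x, ystar x)) @` ([set 2^-1; 1] `|` inner_sol).
Proof.
apply/seteqP; split => [[x y] /solsetP[-> /andP[x0 x1] Fx] | _ [x Hx <-]].
- exists x => //.
  have [<-|xh] := eqVneq 2^-1 x; first by left; left.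
  have [->|xn1] := eqVneq x 1; first by left; right.
  have xh' : 2^-1 < x by rewrite lt_neqAle xh x0.
  have x1' : x < 1 by rewrite lt_neqAle xn1 x1.
  right; split; first by rewrite xh' x1'.
  by apply/xfixed_balanced => //; apply/andP; split; lra.
- apply/solsetP; case: Hx => [[->|->]|[/andP[x0 x1] Bx]].
  + by split; [|apply/andP; split; lra|exact: xfixed_half].
  + by split; [|apply/andP; split; lra|exact: xfixed_one].
  + split => //; first by apply/andP; split; lra.
    by apply/xfixed_balanced => //; apply/andP; split; lra.
Qed.

Lemma graph_ends : (fun x => (x, ystar x)) @` [set 2^-1; 1] = Sset phi h.
Proof. by rewrite image_setU !image_set1 ystar_half ystar_one. Qed.

Lemma inner_sol_set0 : b <= 2 / (phi * (h - 1) + 2) -> inner_sol = set0.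
Proof.
move=> hb; have a0 : 0 < 1 - b by rewrite subr_gt0.
have a1 : 1 - b < 1 by have := b_gt0; lra.
have d0 : 0 <= dnum0 (1 - b) by rewrite dnum0_ge0 subKr.
by apply/seteqP; split => // x [xI Bx]; exact: (balanced_none a0 a1 d0 xI Bx).
Qed.

Lemma inner_sol_xhat : 2 / (phi * (h - 1) + 2) < b -> inner_sol = [set xhat phi h b].
Proof.
move=> hb; have a0 : 0 < 1 - b by rewrite subr_gt0.
have a1 : 1 - b < 1 by have := b_gt0; lra.
have d0 : dnum0 (1 - b) < 0 by rewrite ltNge dnum0_ge0 subKr -ltNge.
have [s sI Bs] := balanced_exists a0 a1 d0.
have -> : inner_sol = [set s].
  apply/seteqP; split => [x [xI Bx]|x ->] //.
  exact: (balanced_uniq a0 a1 xI sI Bx Bs).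
congr [set _]; apply/esym; rewrite /xhat; apply: xget_unique.
  by split => //; apply/gfun_balanced.
by move=> y [yI /(gfun_balanced yI) By]; exact: (balanced_uniq a0 a1 yI sI By Bs).
Qed.

End Equilibria.

Theorem lemmaB3 (R : realType) (b phi hG : R) :
  0 < b < 1 -> 0 < phi < 1 -> 1 < hG ->
  (b <= 2 / (phi * (hG - 1) + 2) -> solset b phi hG = Sset phi hG) /\
  (2 / (phi * (hG - 1) + 2) < b ->
     solset b phi hG =
       Sset phi hG `|`
       [set (xhat phi hG b,
             (phi * (hG + 1) * xhat phi hG b + 1 - phi) / (phi * hG + 2 - phi))]).
Proof.
move=> /andP[b0 b1] /andP[p0 p1] hG1.
rewrite (solsetE p0 p1 hG1 b0) image_setU (graph_ends p0 hG1); split => hb.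
- by rewrite (inner_sol_set0 p0 p1 hG1 b0 b1 hb) image_set0 setU0.
- by rewrite (inner_sol_xhat p0 p1 hG1 b0 b1 hb) image_set1.
Qed.
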